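(* Let $p\ge q$ and $n\ge 1$ be positive integers and let $B$ be a $p\times q$ matrix. Let $C$ be the $(nq+p)\times(nq+p)$ block matrix $$C=\begin{bmatrix} 0 & B & B & \cdots & B\\ B^T & 0 & I & \cdots & I\\ B^T & I & 0 & \cdots & I\\ \vdots & \vdots & \vdots & \ddots & \vdots\\ B^T & I & I & \cdots & 0\end{bmatrix}$$ (one block of size $p$ followed by $n$ blocks of size $q$), and let $D$ be the $(np+q)\times(np+q)$ block matrix $$D=\begin{bmatrix} 0 & B^T & B^T & \cdots & B^T\\ B & 0 & I & \cdots & I\\ B & I & 0 & \cdots & I\\ \vdots & \vdots & \vdots & \ddots & \vdots\\ B & I & I & \cdots & 0\end{bmatrix}$$ (one block of size $q$ followed by $n$ blocks of size $p$). Then $D\oplus 0_{p-q}$ and $C\oplus\underbrace{(J-I)_n\oplus\cdots\oplus(J-I)_n}_{p-q\text{ times}}$ are cospectral.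
   Context: $I$ denotes an identity matrix and $0$ a zero matrix of appropriate size; $0_m$ is the $m\times m$ zero matrix; $(J-I)_n$ is the $n\times n$ matrix with zeros on the diagonal and ones elsewhere. For matrices $X,Y$, $X\oplus Y=\begin{bmatrix} X&0\\0&Y\end{bmatrix}$. Two square matrices are cospectral if they have the same eigenvalues with the same multiplicities. *)

From HB Require Import structures.
From mathcomp Require Import all_boot all_order all_algebra.
Set Implicit Arguments. Unset Strict Implicit. Unset Printing Implicit Defensive.
Import Order.TTheory GRing.Theory Num.Theory.
Local Open Scope ring_scope.

Definition mxnat (R : zmodType) m k (X : 'M[R]_(m, k)) (a b : nat) : R :=
  match @insub _ (fun x => x < m)%N 'I_m a, @insub _ (fun x => x < k)%N 'I_k b with
  | Some i, Some j => X i j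
  | _, _ => 0
  end.

(* The block matrix of size a + n*b
      [ 0  X  X ... X ]
      [ Y  0  I ... I ]
      [ Y  I  0 ... I ]
      [ ...           ]
      [ Y  I  I ... 0 ]
   (one block of size a, then n blocks of size b), with X : a x b, Y : b x a.
   Index k >= a of the big matrix lies in the block (k - a) %/ b at offset
   (k - a) %% b. *)
Definition blockC (R : nzRingType) (n a b : nat) (X : 'M[R]_(a, b)) (Y : 'M[R]_(b, a))
  : 'M[R]_(a + n * b) :=
  \matrix_(i < a + n * b, j < a + n * b)
    if (i < a)%N then
      if (j < a)%N then 0 else mxnat X i ((j - a) %% b)%N
    else
      if (j < a)%N then mxnat Y ((i - a) %% b)%N j
      else if ((((i - a) %/ b) != ((j - a) %/ b)) && (((i - a) %% b) == ((j - a) %% b)))%N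
           then 1 else 0.

Definition JmI (R : nzRingType) (n : nat) : 'M[R]_n :=
  \matrix_(i, j) (if i != j then 1 else 0).

Definition dsum (R : nzRingType) m k (X : 'M[R]_m) (Y : 'M[R]_k) : 'M[R]_(m + k) :=
  block_mx X 0 0 Y.

(* Cospectral: same eigenvalues with the same (algebraic) multiplicities,
   i.e. same characteristic polynomial (this also forces equal sizes). *)
Definition cospectral (R : nzRingType) m k (X : 'M[R]_m) (Y : 'M[R]_k) : Prop :=
  char_poly X = char_poly Y.

From HB Require Import structures.
From mathcomp Require Import all_boot all_order all_algebra ring.
Import Order.TTheory GRing.Theory Num.Theory.
Local Open Scope ring_scope.
Set Implicit Arguments. Unset Strict Implicit. Unset Printing Implicit Defensive.

(* Let G be the (n b) x b matrix of n stacked identity blocks I_b, so that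
   G^T G = n I and blockC n X Y = [[0, X G^T], [G Y, G G^T - I]].  Since
   W = G G^T satisfies W^2 = n W, a Schur complement computation gives, with
   u = x + 1 and s = x + 1 - n,
     u^b s^a chi(blockC n X Y) = u^(n b) s^b det(x s - n X Y).
   Taking (X, Y) = (B^T, B) and (B, B^T), Sylvester's identity
   t^q det(t - n B B^T) = t^p det(t - n B^T B) at t = x s, together with
   u chi(J - I) = u^n s, yields x^(p-q) chi(D) = chi(C) chi(J - I)^(p-q) once
   the nonzero polynomial factors are cancelled. *)

Section Determinants.
Variable S : comNzRingType.

Lemma det_sylvester a b (t : S) (X : 'M[S]_(a, b)) (Y : 'M[S]_(b, a)) :
  t ^+ b * \det (t%:M - X *m Y) = t ^+ a * \det (t%:M - Y *m X).
Proof.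
pose N := block_mx (t%:M : 'M_a) X Y 1%:M.
pose N' := block_mx 1%:M X Y (t%:M : 'M_b).
have detN : \det N = \det (t%:M - X *m Y).
  have : block_mx 1%:M (- X) 0 1%:M *m N = block_mx (t%:M - X *m Y) 0 Y 1%:M.
    by rewrite mulmx_block !mul_scalar_mx !mul_mx_scalar !scale1r !mul0mx
      !scaler0 ?add0r mulNmx addrN.
  move/(congr1 determinant); rewrite det_mulmx det_ublock !det1 !mul1r => ->.
  by rewrite det_lblock det1 mulr1.
have detN' : \det N' = \det (t%:M - Y *m X).
  have : block_mx 1%:M 0 (- Y) 1%:M *m N' = block_mx 1%:M X 0 (t%:M - Y *m X).
    by rewrite mulmx_block !mul_scalar_mx !mul_mx_scalar !scale1r !mul0mx
      !scaler0 ?add0r ?addr0 mulNmx addNr addrC.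
  move/(congr1 determinant); rewrite det_mulmx det_lblock !det1 !mul1r => ->.
  by rewrite det_ublock det1 mul1r.
have : N' *m block_mx t%:M 0 0 1%:M = block_mx 1%:M 0 0 t%:M *m N.
  by rewrite !mulmx_block !mulmx0 !mul0mx !addr0 !add0r
    !mul_mx_scalar !mul_scalar_mx !scale1r.
move/(congr1 determinant); rewrite !det_mulmx det_ublock det_lblock
  !det_scalar !expr1n mulr1 mul1r detN detN' => <-.
exact: mulrC.
Qed.

Section StackedBlock.
Variables (a b N n : nat) (x : S).
Variables (X : 'M[S]_(a, b)) (Y : 'M[S]_(b, a)) (G : 'M[S]_(N, b)).
Hypothesis trGG : G^T *m G = n%:R%:M.
Local Notation u := (x + 1).
Local Notation s := (x + 1 - n%:R).

Lemma det_add_stack : s ^+ b * \det (s%:M + G *m G^T) = s ^+ N * u ^+ b.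
Proof.
have := det_sylvester s (- G) G^T.
by rewrite mulNmx mulmxN !opprK trGG -raddfD subrK det_scalar.
Qed.

Lemma stack_block_reduction :
  block_mx ((u * s)%:M) (u *: (X *m G^T)) 0 1%:M
  *m (x%:M - block_mx 0 (X *m G^T) (G *m Y) (G *m G^T - 1%:M))
  *m block_mx 1%:M 0 0 (s%:M + G *m G^T)
  = block_mx (u *: ((x * s)%:M - n%:R *: (X *m Y))) 0 (- (G *m Y)) ((u * s)%:M).
Proof.
(* W^2 = n W makes s + W an inverse of u - W up to the scalar u s. *)
set W := G *m G^T.
have GtV : G^T *m (s%:M + W) = u *: G^T.
  by rewrite mulmxDr mul_mx_scalar /W mulmxA trGG mul_scalar_mx -scalerDl subrK.
have WW : W *m W = n%:R *: W.
  by rewrite /W mulmxA -(mulmxA G) trGG mul_mx_scalar scalemxAl.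
have uWV : (u%:M - W) *m (s%:M + W) = (u * s)%:M.
  rewrite mulmxBl !mulmxDr -scalar_mxM !mul_mx_scalar mul_scalar_mx WW.
  by rewrite opprD addrA -addrA -opprD -scalerDl subrK addrK.
have -> : x%:M - block_mx 0 (X *m G^T) (G *m Y) (W - 1%:M)
        = block_mx x%:M (- (X *m G^T)) (- (G *m Y)) (u%:M - W).
  by rewrite (scalar_mx_block a N) opp_block_mx add_block_mx !subr0 !add0r
    opprB addrA raddfD.
rewrite !mulmx_block !mulmx0 !mul0mx !mulmx1 !mul1mx ?addr0 ?add0r.
rewrite uWV; congr block_mx.
- rewrite mulmxN -scalemxAl -mulmxA (mulmxA G^T) trGG !mul_scalar_mx.
  by rewrite -scalemxAr scalerBr !scale_scalar_mx mulrAC mulrA.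
- rewrite mulmxDl -!mulmxA uWV mulNmx -mulmxA GtV mul_scalar_mx mul_mx_scalar.
  by rewrite -scalemxAr !scalerN !scalerA mulrC addNr.
Qed.

End StackedBlock.
End Determinants.

Lemma det_stack_block (S : idomainType) a b N n (x : S)
    (X : 'M[S]_(a, b)) (Y : 'M[S]_(b, a)) (G : 'M[S]_(N, b)) :
  G^T *m G = n%:R%:M -> x + 1 != 0 -> x + 1 - n%:R != 0 ->
  (x + 1) ^+ b * (x + 1 - n%:R) ^+ a
    * \det (x%:M - block_mx 0 (X *m G^T) (G *m Y) (G *m G^T - 1%:M))
  = (x + 1) ^+ N * (x + 1 - n%:R) ^+ b
    * \det ((x * (x + 1 - n%:R))%:M - n%:R *: (X *m Y)).
Proof.
move=> trGG u_neq0 s_neq0.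
move: (det_add_stack x trGG) (congr1 determinant (stack_block_reduction x X Y trGG)).
rewrite !det_mulmx !det_ublock det_lblock !det1 mulr1 mul1r !det_scalar detZ.
set u := x + 1; set s := u - n%:R.
set dM := \det (x%:M - _); set dV := \det (s%:M + _) => detV detLMQ.
have uas_neq0 : u ^+ a * s ^+ N != 0 by rewrite mulf_neq0 ?expf_neq0.
apply: (mulIf uas_neq0).
transitivity ((u * s) ^+ a * dM * (s ^+ b * dV)); first by rewrite detV exprMn; ring.
by rewrite mulrCA detLMQ exprMn; ring.
Qed.

Definition idstack_mx (R : nzRingType) b N : 'M[R]_(N, b) :=
  \matrix_(i, j) ((i %% b)%N == j :> nat)%:R.

Section IdStack.
Variables (R : nzRingType) (a b N : nat).
Hypothesis b_gt0 : (0 < b)%N.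
Local Notation G := (idstack_mx R b N).
Local Notation mod_ord i := (Ordinal (ltn_pmod i b_gt0)).

Lemma idstack_mulmx (Y : 'M[R]_(b, a)) (i : 'I_N) j : (G *m Y) i j = Y (mod_ord i) j.
Proof.
rewrite mxE (bigD1 (mod_ord i)) //= mxE eqxx mul1r big1 ?addr0 // => l /negbTE.
by rewrite -val_eqE /= eq_sym mxE => ->; rewrite mul0r.
Qed.

Lemma mulmx_tr_idstack (X : 'M[R]_(a, b)) i (j : 'I_N) :
  (X *m G^T) i j = X i (mod_ord j).
Proof.
rewrite mxE (bigD1 (mod_ord j)) //= !mxE eqxx mulr1 big1 ?addr0 // => l /negbTE.
by rewrite -val_eqE /= eq_sym !mxE => ->; rewrite mulr0.
Qed.

End IdStack.

Lemma tr_idstack_mulmx (R : nzRingType) n b :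
  (idstack_mx R b (n * b))^T *m idstack_mx R b (n * b) = n%:R%:M.
Proof.
apply/matrixP => k l; rewrite !mxE.
under eq_bigr do rewrite !mxE.
pose F j : R := ((j %% b)%N == k :> nat)%:R * ((j %% b)%N == l :> nat)%:R.
rewrite -(big_mkord xpredT F) big_nat_mul.
have block_sum i : \sum_(i * b <= j < i.+1 * b) F j = (k == l)%:R.
  rewrite mulSn addnC -{1}[(i * b)%N]add0n big_addn addKn big_mkord.
  under eq_bigr => j _ do rewrite /F addnC modnMDl modn_small // !val_eqE.
  rewrite (bigD1 k) //= eqxx mul1r big1 ?addr0 // => j /negbTE->.
  by rewrite mul0r.
rewrite (eq_bigr _ (fun i _ => block_sum i)) sumr_const_nat subn0.
by case: (k == l); rewrite ?mul0rn ?mulr0n.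
Qed.

Lemma mxnatE (R : zmodType) m k (X : 'M[R]_(m, k)) (i : 'I_m) (j : 'I_k) :
  mxnat X i j = X i j.
Proof. by rewrite /mxnat !valK. Qed.

Lemma ord_muln_gt0r n b (i : 'I_(n * b)) : (0 < b)%N.
Proof. by case: b i => [|b] [i]; rewrite ?muln0. Qed.

Lemma blockC_idstack (R : nzRingType) n a b (X : 'M[R]_(a, b)) (Y : 'M[R]_(b, a)) :
  let G := idstack_mx R b (n * b) in
  blockC n X Y = block_mx 0 (X *m G^T) (G *m Y) (G *m G^T - 1%:M).
Proof.
move=> G; apply/matrixP => i j; rewrite mxE.
case: split_ordP => [i' ->|i' ->]; case: split_ordP => [j' ->|j' ->];
  rewrite ?block_mxEul ?block_mxEur ?block_mxEdl ?block_mxEdr /=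
    ?ltn_ord ?ltnNge ?leq_addr /= ?addKn.
- by rewrite mxE.
- by rewrite (mulmx_tr_idstack (ord_muln_gt0r j')) -mxnatE.
- by rewrite (idstack_mulmx (ord_muln_gt0r i')) -mxnatE.
- rewrite mxE (idstack_mulmx (ord_muln_gt0r i')) !mxE /=.
  have [eq_mod|neq_mod] := eqVneq (i' %% b)%N (j' %% b)%N; last first.
    have /negbTE-> : i' != j' by apply: contraNneq neq_mod => ->.
    by rewrite andbF subrr.
  have -> : (i' == j') = (i' %/ b == j' %/ b)%N.
    apply/eqP/eqP => [-> // | eq_div]; apply/val_inj.
    by rewrite /= (divn_eq i' b) eq_div eq_mod -divn_eq.
  by rewrite andbT; case: eqP; rewrite ?subrr ?subr0.
Qed.

Lemma polyXaddC_neq0 (R : nzRingType) (c : R) : 'X + c%:P != 0.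
Proof. exact/monic_neq0/monicXaddC. Qed.

Lemma polyX_add1_subn_neq0 (R : nzRingType) n : ('X + 1 - n%:R : {poly R}) != 0.
Proof. by rewrite -addrA -polyC_natr -polyC1 -polyCB polyXaddC_neq0. Qed.

Lemma char_poly0 (R : comNzRingType) k : char_poly (0 : 'M[R]_k) = 'X ^+ k.
Proof. by rewrite /char_poly /char_poly_mx map_mx0 subr0 det_scalar. Qed.

Lemma char_poly_dsum (R : comNzRingType) m k (A : 'M[R]_m) (B : 'M[R]_k) :
  char_poly (dsum A B) = char_poly A * char_poly B.
Proof. by rewrite /char_poly /dsum char_block_diag_mx det_ublock. Qed.

Lemma char_poly_castmx (R : nzRingType) m k (eq_mk : m = k) (A : 'M[R]_m) :
  char_poly (castmx (eq_mk, eq_mk) A) = char_poly A.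
Proof. by case: k / eq_mk; rewrite castmx_id. Qed.

Lemma char_poly_mxdiag (R : comNzRingType) m (p_ : 'I_m -> nat)
    (B_ : forall i, 'M[R]_(p_ i)) :
  char_poly (\mxdiag_i B_ i) = \prod_i char_poly (B_ i).
Proof.
elim: m p_ B_ => [|m IHm] p_ B_.
  by move: (\mxdiag_i B_ i); rewrite !big_ord0 => A; rewrite /char_poly det_mx00.
by rewrite mxdiag_recl char_poly_castmx char_poly_dsum big_ord_recl -IHm.
Qed.

Lemma map_idstack_mx (R : nzRingType) b N :
  map_mx (@polyC R) (idstack_mx R b N) = idstack_mx {poly R} b N.
Proof. by apply/matrixP => i j; rewrite !mxE polyC_natr. Qed.

Lemma char_poly_blockC (R : idomainType) n a b (X : 'M[R]_(a, b)) (Y : 'M[R]_(b, a)) :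
  ('X + 1) ^+ b * ('X + 1 - n%:R) ^+ a * char_poly (blockC n X Y)
  = ('X + 1) ^+ (n * b) * ('X + 1 - n%:R) ^+ b
    * \det (('X * ('X + 1 - n%:R))%:M - n%:R *: (map_mx polyC X *m map_mx polyC Y)).
Proof.
rewrite /char_poly /char_poly_mx blockC_idstack map_block_mx map_mx0 map_mxB map_mx1
  !map_mxM -map_trmx map_idstack_mx.
apply: det_stack_block; first exact: tr_idstack_mulmx.
  by rewrite -polyC1 polyXaddC_neq0.
exact: polyX_add1_subn_neq0.
Qed.

Lemma det_gram_sylvester (R : idomainType) p q (c t : R) (P : 'M[R]_(p, q)) :
  t != 0 -> (q <= p)%N ->
  \det (t%:M - c *: (P *m P^T)) = t ^+ (p - q) * \det (t%:M - c *: (P^T *m P)).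
Proof.
move=> t_neq0 le_qp; apply: (mulfI (expf_neq0 q t_neq0)).
by rewrite mulrA -exprD subnKC // scalemxAl det_sylvester -scalemxAr.
Qed.

Lemma char_poly_JmI (R : idomainType) n :
  ('X + 1) * char_poly (JmI R n) = ('X + 1) ^+ n * ('X + 1 - n%:R).
Proof.
pose c := const_mx 1 : 'M[{poly R}]_(n, 1).
pose r := const_mx 1 : 'M[{poly R}]_(1, n).
have JmIE : map_mx polyC (JmI R n) = c *m r - 1%:M.
  apply/matrixP => i j; rewrite !mxE big_ord1 !mxE mulr1.
  by case: eqP => _ /=; rewrite ?subrr ?subr0.
have rc : r *m c = n%:R%:M.
  apply/matrixP => i j; rewrite !mxE.
  under eq_bigr => k _ do rewrite !mxE mulr1.
  by rewrite sumr_const card_ord !ord1 eqxx mulr1n.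
have := det_sylvester ('X + 1) c r.
rewrite rc -raddfB det_scalar !expr1 => <-.
by rewrite /char_poly /char_poly_mx JmIE opprB addrA raddfD.
Qed.

Theorem theorem3p15 (R : realFieldType) (p q n : nat) (B : 'M[R]_(p, q)) :
  (1 <= q)%N -> (q <= p)%N -> (1 <= n)%N ->
  cospectral
    (dsum (blockC n B^T B) (0 : 'M[R]_(p - q)))
    (dsum (blockC n B B^T) (\mxdiag_(i < p - q) JmI R n)).
Proof.
move=> _ le_qp _.
rewrite /cospectral !char_poly_dsum char_poly0 char_poly_mxdiag prodr_const card_ord.
have charD := char_poly_blockC n B^T B; have charC := char_poly_blockC n B B^T.
rewrite -map_trmx in charD charC.
have t_neq0 : 'X * ('X + 1 - n%:R) != 0 :> {poly R}.
  by rewrite mulf_neq0 ?polyX_eq0 ?polyX_add1_subn_neq0.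
move: charD charC (char_poly_JmI R n)
  (det_gram_sylvester n%:R (map_mx polyC B) t_neq0 le_qp).
set P := map_mx polyC B; set u := 'X + 1; set s := u - n%:R.
set dp := \det (_ - _ *: (P *m P^T)); set dq := \det (_ - _ *: (P^T *m P)).
set cD := char_poly (blockC n B^T B); set cC := char_poly (blockC n B B^T).
set cJ := char_poly (JmI R n); set e := (p - q)%N => charD charC charJ dpE.
have expS (z : {poly R}) : z ^+ p = z ^+ q * z ^+ e by rewrite -exprD subnKC.
have u_neq0 : u != 0 by rewrite /u -polyC1 polyXaddC_neq0.
have s_neq0 : s != 0 by exact: polyX_add1_subn_neq0.
(* Both sides, multiplied by u^p s^p, equal u^(n p) s^p dp. *)
apply: (mulIf (mulf_neq0 (expf_neq0 p u_neq0) (expf_neq0 p s_neq0))).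
transitivity (u ^+ (n * p) * s ^+ p * dp).
  have -> : cD * 'X ^+ e * (u ^+ p * s ^+ p)
           = u ^+ p * s ^+ q * cD * ('X ^+ e * s ^+ e) by rewrite [s ^+ p]expS; ring.
  by rewrite charD dpE exprMn; ring.
have -> : cC * cJ ^+ e * (u ^+ p * s ^+ p) = u ^+ q * s ^+ p * cC * (u * cJ) ^+ e.
  by rewrite [u ^+ p]expS exprMn; ring.
by rewrite charC charJ !exprM [_ ^+ p]expS [s ^+ p]expS !exprMn; ring.
Qed.
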